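(* Let $D$ be a torus invariant Weil divisor on the cyclic quotient singularity $X$, and let $u^0,\dots,u^r$ be the elements of $G(D)$, ordered so that $\langle u^0,\rho^0\rangle<\langle u^1,\rho^0\rangle<\dots<\langle u^r,\rho^0\rangle$. Let $\pi:\bigoplus_{i=0}^r R[-u^i]\to\Gamma(D)$ be the map $e^i\mapsto x^{u^i}$, and let \[ \iota:\bigoplus_{i=1}^r \big((x^{u^{i-1}})\cap(x^{u^i})\big)\to\bigoplus_{i=0}^r R[-u^i] \] be the map which on the $i$-th summand sends $x^u\mapsto x^{u-u^i}e^i-x^{u-u^{i-1}}e^{i-1}$. Then the sequence \[ 0\to\bigoplus_{i=1}^r\big((x^{u^{i-1}})\cap(x^{u^i})\big)\xrightarrow{\iota}\bigoplus_{i=0}^rR[-u^i]\xrightarrow{\pi}\Gamma(D)\to 0 \] is exact. Furthermore, each fractional ideal $(x^{u^{i-1}})\cap(x^{u^i})$ is divisorial, i.e. equal to $\Gamma(W)$ for some torus invariant Weil divisor $W$.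
   Context: Fix coprime integers $0<q<n$. Let $M=\mathbb Z^2$, $M_{\mathbb Q}=\mathbb Q^2$, with the standard scalar product $\langle\cdot,\cdot\rangle$. Put $\rho^0=(1,0)$, $\rho^1=(-q,n)$, $\sigma^\vee=\{u\in M_{\mathbb Q}:\langle u,\rho^0\rangle\ge 0,\ \langle u,\rho^1\rangle\ge 0\}$, $R=\mathbb C[\sigma^\vee\cap M]$ (monomials $x^u$), $X=\mathrm{Spec}\,R$. A torus invariant Weil divisor is $D=a_0[\rho^0]+a_1[\rho^1]$, $a_i\in\mathbb Z$, with section polyhedron $P_D=\{u\in M_{\mathbb Q}:\langle u,\rho^i\rangle\ge -a_i,\ i=0,1\}$ and global sections $\Gamma(D)=\bigoplus_{u\in P_D\cap M}\mathbb C\,x^u\subseteq\mathbb C[M]$, an $M$-graded $R$-module. $G(D)$ denotes the set of lattice points $u\in M$ lying on a compact edge of the convex hull $\mathrm{conv}(P_D\cap M)$ (these are the minimal homogeneous generators of $\Gamma(D)$). For $u\in M$, $R[-u]$ is the free $M$-graded $R$-module of rank one with basis element $e$ in degree $u$, and $(x^u)=x^uR\subseteq\mathbb C[M]$ is the principal fractional ideal. *)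

From mathcomp Require Import all_boot all_order all_algebra.
From mathcomp Require Import Rstruct complex.
Set Implicit Arguments. Unset Strict Implicit. Unset Printing Implicit Defensive.
Import Order.TTheory GRing.Theory Num.Theory.
Local Open Scope ring_scope.

Definition C : fieldType := complex.complex Rdefinitions.R.

Definition M := (int * int)%type.

Definition dot (u v : M) : int := u.1 * v.1 + u.2 * v.2.
Definition addM (u v : M) : M := (u.1 + v.1, u.2 + v.2).
Definition subM (u v : M) : M := (u.1 - v.1, u.2 - v.2).

Definition rho0 : M := (1, 0).
Definition rho1 (n q : nat) : M := (- (q%:Z), n%:Z).

Definition in_sigma_dual (n q : nat) (u : M) : bool :=
  (0 <= dot u rho0) && (0 <= dot u (rho1 n q)).

(* lattice points of the section polyhedron P_D, D = a0 [rho^0] + a1 [rho^1] *)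
Definition in_PD (n q : nat) (a0 a1 : int) (u : M) : bool :=
  (- a0 <= dot u rho0) && (- a1 <= dot u (rho1 n q)).

(* Elements of C[M] (Laurent polynomials) are represented by their
   coefficient functions M -> K with finite support; x^u is the indicator of u. *)
Definition fin_supp (K : fieldType) (f : M -> K) : Prop :=
  exists s : seq M, forall m, f m != 0 -> m \in s.

Definition supp_in (K : fieldType) (f : M -> K) (P : M -> bool) : Prop :=
  forall m, f m != 0 -> P m.

Definition in_R (K : fieldType) (n q : nat) (f : M -> K) : Prop :=
  fin_supp f /\ supp_in f (in_sigma_dual n q).

Definition in_Gamma (K : fieldType) (n q : nat) (a0 a1 : int) (f : M -> K) : Prop :=
  fin_supp f /\ supp_in f (in_PD n q a0 a1).

Definition in_principal (K : fieldType) (n q : nat) (u : M) (f : M -> K) : Prop :=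
  fin_supp f /\ supp_in f (fun m => in_sigma_dual n q (subM m u)).

(* multiplication by the monomial x^u *)
Definition shift (K : fieldType) (u : M) (f : M -> K) : M -> K :=
  fun m => f (subM m u).

(* G(D): lattice points on the compact faces of conv(P_D \cap M), i.e.
   lattice points of P_D minimizing some linear functional w = a rho^0 + b rho^1
   with a, b > 0 (w in the interior of sigma) over P_D \cap M. *)
Definition in_G (n q : nat) (a0 a1 : int) (u : M) : Prop :=
  in_PD n q a0 a1 u /\
  exists a b : rat, 0 < a /\ 0 < b /\
    forall v : M, in_PD n q a0 a1 v ->
      a * (dot u rho0)%:~R + b * (dot u (rho1 n q))%:~R
      <= a * (dot v rho0)%:~R + b * (dot v (rho1 n q))%:~R.

(* An element of the direct sum (+)_{i=0}^r R[-u^i] is a family g of elements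
   of R, g i being the coefficient of the basis element e^i (degree u^i). *)
Definition in_free_sum (K : fieldType) (n q r : nat) (g : nat -> M -> K) : Prop :=
  forall i, (i <= r)%N -> in_R n q (g i).

Definition in_ideal_sum (K : fieldType) (n q r : nat) (u : nat -> M)
    (f : nat -> M -> K) : Prop :=
  forall i, (1 <= i <= r)%N ->
    in_principal n q (u i.-1) (f i) /\ in_principal n q (u i) (f i).

Definition pi_map (K : fieldType) (r : nat) (u : nat -> M) (g : nat -> M -> K) : M -> K :=
  fun m => \sum_(i < r.+1) shift (u i) (g i) m.

(* iota : on the i-th summand, x^w |-> x^{w-u^i} e^i - x^{w-u^{i-1}} e^{i-1};
   component j of iota f collects +x^{-u^j} f_j (if 1<=j<=r) and
   -x^{-u^j} f_{j+1} (if j+1 <= r). *)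
Definition iota_map (K : fieldType) (r : nat) (u : nat -> M) (f : nat -> M -> K)
    : nat -> M -> K :=
  fun j m =>
    (if (1 <= j <= r)%N then shift (subM (0,0) (u j)) (f j) m else 0)
    - (if (j.+1 <= r)%N then shift (subM (0,0) (u j)) (f j.+1) m else 0).

From mathcomp Require Import all_boot all_order all_algebra.
From mathcomp Require Import Rstruct complex.
From mathcomp Require Import zify ring lra.
From Stdlib Require Import Classical.
Import Order.TTheory GRing.Theory Num.Theory.
Local Open Scope ring_scope.
Set Implicit Arguments. Unset Strict Implicit.

(* Writing A = <., rho^0> and B = <., rho^1>, a lattice point is determined by its
   coordinates (A, B); P_D is the quadrant A >= -a0, B >= -a1, and the monomials of
   (x^w) are those lying above w in both coordinates. So every module of the sequence
   is spanned by its monomials and everything reduces to comparing coordinates.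

   G(D) is the set of Pareto-minimal points of P_D. A minimal point v lies below
   every chord of P_D through lattice points x, y on either side of it: otherwise
   x + y - v, again a lattice point of P_D, contradicts minimality or gives a shorter
   such chord. The segment from v to the next minimal point is then a supporting
   line, so v lies on a compact edge.

   Hence u^0, ..., u^r is a staircase (A increasing, B decreasing) below every lattice
   point of P_D, which makes pi onto. The intersection (x^{u^{i-1}}) \cap (x^{u^i}) is
   the quadrant A >= A u^i, B >= B u^{i-1}, hence divisorial. If sum_i x^{u^i} g_i = 0,
   the tail sums f_i = sum_{k >= i} x^{u^k} g_k are also minus the head sums, so they
   lie in that quadrant, and iota f = g. *)

Lemma ex_argmin_int (T : Type) (P : T -> Prop) (f : T -> int) (lb : int) :
  (forall x, P x -> lb <= f x) -> (exists x, P x) ->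
  exists2 x, P x & forall y, P y -> f x <= f y.
Proof.
move=> f_lb [x0 Px0].
have [k le_k] : exists k : nat, f x0 - lb <= k%:Z by exists `|f x0 - lb|%N; lia.
elim: k x0 Px0 le_k => [|k IH] x Px le_k.
  by exists x => // y /f_lb; lia.
case: (classic (exists2 y, P y & f y < f x)) => [[y Py lt_yx]|no_lt].
  by apply: (IH y Py); have := f_lb _ Py; lia.
exists x => // y Py; rewrite leNgt; apply/negP => lt_yx.
by apply: no_lt; exists y.
Qed.

Lemma dotDl x y v : dot (addM x y) v = dot x v + dot y v.
Proof. by rewrite /dot /addM /=; ring. Qed.

Lemma dotBl x y v : dot (subM x y) v = dot x v - dot y v.
Proof. by rewrite /dot /subM /=; ring. Qed.

Lemma subMK m w : addM (subM m w) w = m.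
Proof. by case: m w => [? ?] [? ?]; rewrite /subM /addM /=; congr pair; ring. Qed.

Lemma addMK m w : subM (addM m w) w = m.
Proof. by case: m w => [? ?] [? ?]; rewrite /subM /addM /=; congr pair; ring. Qed.

Lemma subMNK m w : subM (subM m (subM (0, 0) w)) w = m.
Proof. by case: m w => [? ?] [? ?]; rewrite /subM /=; congr pair; ring. Qed.

Lemma subMKN m w : subM (subM m w) (subM (0, 0) w) = m.
Proof. by case: m w => [? ?] [? ?]; rewrite /subM /=; congr pair; ring. Qed.

Lemma addr_neq0 (V : nmodType) (a b : V) : a + b != 0 -> (a != 0) || (b != 0).
Proof.
by apply: contraR; rewrite negb_or !negbK => /andP[/eqP-> /eqP->]; rewrite addr0.
Qed.

Lemma sumr_neq0_has (V : nmodType) (I : eqType) (s : seq I) (F : I -> V) :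
  \sum_(i <- s) F i != 0 -> has (fun i => F i != 0) s.
Proof.
apply: contraNT => /hasPn F0; rewrite big1_seq // => i /andP[_ /F0].
by rewrite negbK => /eqP.
Qed.

Section FiniteSupport.
Variable K : fieldType.
Implicit Types f g h : M -> K.

Lemma fin_supp_cover f1 f2 g : fin_supp f1 -> fin_supp f2 ->
  (forall m, g m != 0 -> (f1 m != 0) || (f2 m != 0)) -> fin_supp g.
Proof.
move=> [s1 s1P] [s2 s2P] cover; exists (s1 ++ s2) => m /cover /orP[/s1P|/s2P] sm.
  by rewrite mem_cat sm.
by rewrite mem_cat sm orbT.
Qed.

Lemma fin_supp_sum (I : eqType) (s : seq I) (F : I -> M -> K) :
  (forall i, i \in s -> fin_supp (F i)) -> fin_supp (fun m => \sum_(i <- s) F i m).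
Proof.
elim: s => [|i s IH] Fs; first by exists [::] => m; rewrite big_nil eqxx.
apply: (fin_supp_cover (Fs i (mem_head _ _)) (IH _)) => [j js|m].
  by apply: Fs; rewrite in_cons js orbT.
by rewrite big_cons; apply: addr_neq0.
Qed.

Lemma fin_supp_shift w f : fin_supp f -> fin_supp (shift w f).
Proof.
move=> [s sP]; exists (map (addM^~ w) s) => m /sP sm.
by rewrite -(subMK m w); apply: map_f.
Qed.

End FiniteSupport.

Section CyclicQuotient.
Variables (n q : nat) (a0 a1 : int).

Local Notation A x := (dot x rho0).
Local Notation B x := (dot x (rho1 n q)).
Local Notation PD := (in_PD n q a0 a1).

Lemma in_sigma_dual_subM m w :
  in_sigma_dual n q (subM m w) = (A w <= A m) && (B w <= B m).
Proof. by rewrite /in_sigma_dual !dotBl !subr_ge0. Qed.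

Section Resolution.
Variables (K : fieldType) (r : nat) (u : nat -> M).
Hypothesis A_u_mono : forall i, (i < r)%N -> A (u i) <= A (u i.+1).
Hypothesis B_u_mono : forall i, (i < r)%N -> B (u i.+1) <= B (u i).

Lemma A_u_le i j : (i <= j <= r)%N -> A (u i) <= A (u j).
Proof.
elim: j => [|j IH] /andP[le_ij le_jr]; first by move: le_ij; rewrite leqn0 => /eqP->.
move: le_ij; rewrite leq_eqVlt => /orP[/eqP-> //|lt_ij].
by apply: le_trans (IH _) (A_u_mono le_jr); rewrite -ltnS lt_ij ltnW.
Qed.

Lemma B_u_le i j : (i <= j <= r)%N -> B (u j) <= B (u i).
Proof.
elim: j => [|j IH] /andP[le_ij le_jr]; first by move: le_ij; rewrite leqn0 => /eqP->.
move: le_ij; rewrite leq_eqVlt => /orP[/eqP-> //|lt_ij].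
by apply: le_trans (B_u_mono le_jr) (IH _); rewrite -ltnS lt_ij ltnW.
Qed.

Lemma principal_capE i (f : M -> K) : (1 <= i <= r)%N ->
  (in_principal n q (u i.-1) f /\ in_principal n q (u i) f) <->
  in_Gamma n q (- A (u i)) (- B (u i.-1)) f.
Proof.
move=> /andP[i_gt0 le_ir].
have leA := @A_u_le i.-1 i (ltac:(lia)); have leB := @B_u_le i.-1 i (ltac:(lia)).
rewrite /in_principal /in_Gamma /supp_in /in_PD.
split=> [[[f_fin f_i1] [_ f_i]]|[f_fin f_supp]].
- split=> // m /[dup] /f_i1 + /f_i; rewrite !in_sigma_dual_subM !opprK.
  by move=> /andP[? ?] /andP[? ?]; apply/andP; split; lia.
- by split; split=> // m /f_supp; rewrite in_sigma_dual_subM !opprK;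
    move=> /andP[? ?]; apply/andP; split; lia.
Qed.

Lemma in_R_if (c : bool) (h : M -> K) :
  (c -> in_R n q h) -> in_R n q (fun m => if c then h m else 0).
Proof. by case: c => [/(_ isT) //|_]; split=> [|m]; [exists [::]|]; rewrite eqxx. Qed.

Lemma in_RB (h1 h2 : M -> K) :
  in_R n q h1 -> in_R n q h2 -> in_R n q (fun m => h1 m - h2 m).
Proof.
move=> [h1_fin h1_supp] [h2_fin h2_supp].
have neq0 m : h1 m - h2 m != 0 -> (h1 m != 0) || (h2 m != 0).
  by move/addr_neq0; rewrite oppr_eq0.
split; first exact: fin_supp_cover h1_fin h2_fin neq0.
by move=> m /neq0 /orP[/h1_supp|/h2_supp].
Qed.

Lemma in_R_shift_principal w (h : M -> K) :
  in_principal n q w h -> in_R n q (shift (subM (0, 0) w) h).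
Proof.
move=> [h_fin h_supp]; split; first exact: fin_supp_shift.
by move=> m /h_supp; rewrite subMNK.
Qed.

Lemma iota_map_in_free_sum (f : nat -> M -> K) :
  in_ideal_sum n q r u f -> in_free_sum n q r (iota_map r u f).
Proof.
move=> f_ideal j le_jr; apply: in_RB; apply: in_R_if.
- by move=> j_range; apply: in_R_shift_principal (f_ideal j j_range).2.
- by move=> lt_jr; apply: in_R_shift_principal (f_ideal j.+1 lt_jr).1.
Qed.

Lemma iota_map_inj (f : nat -> M -> K) :
  (forall j m, (j <= r)%N -> iota_map r u f j m = 0) ->
  forall i m, (1 <= i <= r)%N -> f i m = 0.
Proof.
move=> iota0; elim=> [//|i IH] m /andP[_ lt_ir].
have := iota0 i (subM m (u i)) (ltnW lt_ir); rewrite /iota_map /shift subMKN lt_ir.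
case: i IH lt_ir => [|i] IH lt_ir /=; last rewrite (ltnW lt_ir) IH ?(ltnW lt_ir) //.
all: by rewrite sub0r => /eqP; rewrite oppr_eq0 => /eqP.
Qed.

Lemma pi_map_eq0_iota (g f : nat -> M -> K) :
  (forall j m, (j <= r)%N -> iota_map r u f j m = g j m) ->
  forall m, pi_map r u g m = 0.
Proof.
move=> iota_g m; pose h j := if (1 <= j <= r)%N then f j m else 0.
transitivity (\sum_(j < r.+1) - (h j.+1 - h j)).
  apply: eq_bigr => j _; rewrite /shift -(iota_g _ _ (ltn_ord j)).
  by rewrite /iota_map /shift subMKN opprB.
rewrite sumrN -(big_mkord xpredT (fun j => h j.+1 - h j)) telescope_sumr //.
by rewrite /h /= ltnn subrr oppr0.
Qed.

Definition tail_sum (g : nat -> M -> K) (i : nat) (m : M) : K :=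
  \sum_(i <= k < r.+1) shift (u k) (g k) m.

Lemma tail_sum_in_cap (g : nat -> M -> K) i :
  in_free_sum n q r g -> (forall m, pi_map r u g m = 0) -> (1 <= i <= r)%N ->
  in_Gamma n q (- A (u i)) (- B (u i.-1)) (tail_sum g i).
Proof.
move=> g_free pi_g0 /andP[i_gt0 le_ir]; pose F k m := shift (u k) (g k) m.
have F_supp k m : (k <= r)%N -> F k m != 0 -> (A (u k) <= A m) && (B (u k) <= B m).
  by move=> le_kr /(g_free k le_kr).2; rewrite in_sigma_dual_subM.
split=> [|m tail_neq0].
  apply: fin_supp_sum => k; rewrite mem_index_iota => /andP[_ lt_kr].
  exact: fin_supp_shift (g_free k lt_kr).1.
have head_neq0 : \sum_(0 <= k < i) F k m != 0.
  apply: contraNneq tail_neq0 => head0; move: (pi_g0 m).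
  rewrite /pi_map -(big_mkord xpredT (fun k => F k m)).
  by rewrite (big_cat_nat (leq0n i) (leqW le_ir)) /= head0 add0r => /eqP.
have /hasP[k] := sumr_neq0_has tail_neq0; rewrite mem_index_iota.
move=> /andP[le_ik lt_kr] /(F_supp k m lt_kr) /andP[leA _].
have /hasP[k'] := sumr_neq0_has head_neq0; rewrite mem_index_iota.
move=> /andP[_ lt_k'i] /(F_supp k' m (ltnW (leq_trans lt_k'i le_ir))) /andP[_ leB].
rewrite /in_PD !opprK; apply/andP; split.
- by apply: le_trans leA; apply: A_u_le; lia.
- by apply: le_trans leB; apply: B_u_le; lia.
Qed.

Lemma iota_map_tail_sum (g : nat -> M -> K) j m :
  (forall m, pi_map r u g m = 0) -> (j <= r)%N -> iota_map r u (tail_sum g) j m = g j m.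
Proof.
move=> pi_g0 le_jr; rewrite /iota_map /shift /tail_sum.
have if_id (c : bool) (t : K) : (c = false -> t = 0) -> (if c then t else 0) = t.
  by case: c => // ->.
rewrite [X in X - _]if_id => [|j_out]; last first.
  have -> : j = 0%N by move: j_out; rewrite le_jr andbT; case: j {le_jr}.
  by rewrite big_mkord; apply: pi_g0.
rewrite [X in _ - X]if_id => [|j_last]; last by rewrite big_geq // ltnS leqNgt j_last.
by rewrite big_ltn // addrK /shift subMNK.
Qed.

Lemma ker_pi_map_sub_iota (g : nat -> M -> K) :
  in_free_sum n q r g -> (forall m, pi_map r u g m = 0) ->
  exists2 f : nat -> M -> K, in_ideal_sum n q r u f &
    forall j m, (j <= r)%N -> iota_map r u f j m = g j m.
Proof.
move=> g_free pi_g0; exists (tail_sum g) => [i i_range|j m].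
  by apply/principal_capE => //; apply: tail_sum_in_cap.
exact: iota_map_tail_sum.
Qed.

Hypothesis PD_u : forall i, (i <= r)%N -> PD (u i).
Hypothesis PD_dominated : forall m, PD m ->
  exists2 i, (i <= r)%N & in_sigma_dual n q (subM m (u i)).

Lemma pi_map_in_Gamma (g : nat -> M -> K) :
  in_free_sum n q r g -> in_Gamma n q a0 a1 (pi_map r u g).
Proof.
move=> g_free; split.
  by apply: fin_supp_sum => k _; apply: fin_supp_shift (g_free k (ltn_ord k)).1.
move=> m /sumr_neq0_has/hasP[k _ /(g_free k (ltn_ord k)).2].
rewrite in_sigma_dual_subM => /andP[leA leB].
by have /andP[? ?] := PD_u (ltn_ord k); apply/andP; split; lia.
Qed.

Lemma pi_map_surj (h : M -> K) : in_Gamma n q a0 a1 h ->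
  exists2 g, in_free_sum n q r g & forall m, pi_map r u g m = h m.
Proof.
move=> [[s h_fin] h_PD].
pose first_below m := [pick k : 'I_r.+1 | in_sigma_dual n q (subM m (u k))].
exists (fun i w => let m := addM w (u i) in
  if omap val (first_below m) == Some i then h m else 0).
- move=> i le_ir; split.
    exists (map (subM^~ (u i)) s) => w /=; case: ifP => _; last by rewrite eqxx.
    by move/h_fin; rewrite -{2}(addMK w (u i)); apply: map_f.
  move=> w /=; case: ifP => [|_]; last by rewrite eqxx.
  rewrite /first_below; case: pickP => //= k below /eqP[ki] _.
  by rewrite -ki addMK in below.
- move=> m; rewrite /pi_map /shift /=; under eq_bigr do rewrite subMK.
  rewrite /first_below; case: pickP => [k below|none] /=.
    rewrite (bigD1 k) //= eqxx big1 ?addr0 // => i /negbTE ik.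
    by case: eqP => // -[/val_inj ki]; rewrite ki eqxx in ik.
  rewrite big1 //; apply/esym/eqP/negPn/negP => /h_PD /PD_dominated[i le_ir below].
  by have := none (Ordinal (le_ir : (i < r.+1)%N)); rewrite /= below.
Qed.

End Resolution.

Definition pareto_min (v : M) : Prop :=
  PD v /\ forall x, PD x -> A x <= A v -> B x <= B v -> x = v.

Lemma pareto_min_leA v x : pareto_min v -> PD x -> A x <= A v -> B v <= B x.
Proof.
move=> [_ v_min] Px le_xv; rewrite leNgt; apply/negP => lt_xv.
by have e := v_min x Px le_xv (ltW lt_xv); rewrite e ltxx in lt_xv.
Qed.

Lemma pareto_min_ltA v x : pareto_min v -> PD x -> A x < A v -> B v < B x.
Proof.
move=> v_min Px lt_xv; have le_xv := ltW lt_xv.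
rewrite lt_neqAle (pareto_min_leA v_min Px le_xv) andbT.
by apply: contraTneq lt_xv => eB; rewrite (v_min.2 x Px le_xv) ?ltxx // eB.
Qed.

Lemma pareto_min_ltB v x : pareto_min v -> PD x -> B x < B v -> A v < A x.
Proof.
move=> v_min Px lt_xv; rewrite ltNge; apply/negP => /(pareto_min_leA v_min Px).
by rewrite leNgt lt_xv.
Qed.

Lemma pareto_min_below_chord v x y : pareto_min v -> PD x -> PD y ->
  A x < A v -> A v < A y ->
  (B v - B y) * (A v - A x) <= (B x - B v) * (A y - A v).
Proof.
move=> v_min; have [k le_k] : exists k : nat, A y - A x <= k%:Z.
  by exists `|A y - A x|%N; lia.
elim: k x y le_k => [|k IH] x y le_k Px Py lt_xv lt_vy; first lia.
rewrite leNgt; apply/negP => above.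
(* Reflecting v through the midpoint of x and y gives a lattice point of P_D. *)
set z := subM (addM x y) v.
have zA : A z = A x + A y - A v by rewrite dotBl dotDl.
have zB : B z = B x + B y - B v by rewrite dotBl dotDl.
have lt_vx := pareto_min_ltA v_min Px lt_xv.
have Pz : PD z.
  by move: Px Py; rewrite /in_PD zA zB => /andP[? ?] /andP[? ?]; apply/andP; lia.
case: (ltgtP (A z) (A v)) => [lt_zv|lt_vz|eq_zv].
- have := pareto_min_ltA v_min Pz lt_zv.
  have := IH z y (ltac:(lia)) Pz Py lt_zv lt_vy; rewrite zA zB; nia.
- have := IH x z (ltac:(lia)) Px Pz lt_xv lt_vz; rewrite zA zB; nia.
- have := pareto_min_leA v_min Pz (ltac:(lia)); rewrite zA zB in eq_zv *; nia.
Qed.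

Lemma pareto_min_supported_last v : pareto_min v ->
  (forall x, PD x -> A v < A x -> B v <= B x) ->
  forall x, PD x -> A v + (A v + a0 + 1) * B v <= A x + (A v + a0 + 1) * B x.
Proof.
move=> v_min v_last x Px; have /andP[? ?] := Px; have /andP[? ?] := v_min.1.
case: (ltgtP (A x) (A v)) => [lt_xv|lt_vx|eq_xv].
- have lt_vx := pareto_min_ltA v_min Px lt_xv.
  have : 0 <= (A v + a0 + 1) * (B x - B v - 1) by apply: mulr_ge0; lia.
  nia.
- have := v_last x Px lt_vx; nia.
- have := pareto_min_leA v_min Px (ltac:(lia)); nia.
Qed.

Hypothesis n_gt0 : (0 < n)%N.

Lemma dot_rho_inj x y : A x = A y -> B x = B y -> x = y.
Proof.
case: x y => [x1 x2] [y1 y2]; rewrite /dot /= !mulr1 !mulr0 !addr0 => -> eB.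
congr pair; apply: (@mulfI _ n%:Z); first by lia.
by move: eB; rewrite !(mulrC n%:Z); lia.
Qed.

Lemma exists_pareto_min_le m : PD m ->
  exists2 v, pareto_min v & A v <= A m /\ B v <= B m.
Proof.
move=> Pm.
have [v [Pv [le_vmA le_vmB]] v_min] :=
  @ex_argmin_int _ (fun x => [/\ PD x, A x <= A m & B x <= B m])
    (fun x => A x + B x) (- a0 - a1)
    (fun x '(And3 Px _ _) => ltac:(move: Px => /andP[? ?]; lia))
    (ex_intro _ m (And3 Pm (lexx _) (lexx _))).
exists v => //; split=> // x Px le_xvA le_xvB.
have := v_min x (And3 Px (le_trans le_xvA le_vmA) (le_trans le_xvB le_vmB)).
by move=> ?; apply: dot_rho_inj; lia.
Qed.

Lemma pareto_min_supported_next v w : pareto_min v -> pareto_min w -> A v < A w ->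
  (forall x, pareto_min x -> A v < A x -> A w <= A x) ->
  forall x, PD x ->
  (B v - B w) * A v + (A w - A v) * B v <= (B v - B w) * A x + (A w - A v) * B x.
Proof.
move=> v_min w_min lt_vw w_next x Px.
have lt_wv := pareto_min_ltA w_min v_min.1 lt_vw.
case: (ltgtP (A x) (A v)) => [lt_xv|lt_vx|eq_xv].
- have := pareto_min_below_chord v_min Px w_min.1 lt_xv lt_vw; nia.
- case: (ltgtP (A x) (A w)) => [lt_xw|lt_wx|eq_xw].
  + have le_vx : B v <= B x.
      rewrite leNgt; apply/negP => lt_xv.
      have [x' x'_min [le_x'xA le_x'xB]] := exists_pareto_min_le Px.
      have := pareto_min_ltB v_min x'_min.1 (le_lt_trans le_x'xB lt_xv).
      move/(w_next x' x'_min); lia.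
    nia.
  + have := pareto_min_below_chord w_min v_min.1 Px lt_vw lt_wx; nia.
  + have := pareto_min_leA w_min Px (ltac:(lia)); nia.
- have := pareto_min_leA v_min Px (ltac:(lia)); nia.
Qed.

Lemma pareto_min_supported v : pareto_min v -> exists a b : int,
  [/\ 0 < a, 0 < b & forall x, PD x -> a * A v + b * B v <= a * A x + b * B x].
Proof.
move=> v_min.
case: (classic (exists2 y, PD y & A v < A y /\ B y < B v)) => [[y Py [_ lt_yv]]|v_last].
- have [y' y'_min [_ le_y'y]] := exists_pareto_min_le Py.
  have lt_vy' := pareto_min_ltB v_min y'_min.1 (le_lt_trans le_y'y lt_yv).
  have [w [w_min lt_vw] w_next] := @ex_argmin_int _
    (fun w => pareto_min w /\ A v < A w) (fun w => A w) (A v)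
    (fun w '(conj _ lt_vw) => ltW lt_vw) (ex_intro _ y' (conj y'_min lt_vy')).
  have lt_wv := pareto_min_ltA w_min v_min.1 lt_vw.
  exists (B v - B w), (A w - A v); split; rewrite ?subr_gt0 //.
  by apply: pareto_min_supported_next => // x x_min lt_vx; apply: w_next.
- exists 1, (A v + a0 + 1); split=> //; first by have /andP[? _] := v_min.1; lia.
  move=> x; rewrite !mul1r; apply: (pareto_min_supported_last v_min) => y Py lt_vy.
  by rewrite leNgt; apply/negP => lt_yv; apply: v_last; exists y.
Qed.

Lemma in_G_pareto_min v : in_G n q a0 a1 v <-> pareto_min v.
Proof.
split=> [[Pv [a [b [a_gt0 [b_gt0 v_opt]]]]]|v_min].
- split=> // x Px le_xvA le_xvB; have opt := v_opt x Px.
  have le_xvA' : (A x)%:~R <= (A v)%:~R :> rat by rewrite ler_int.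
  have le_xvB' : (B x)%:~R <= (B v)%:~R :> rat by rewrite ler_int.
  by apply: dot_rho_inj; apply/eqP; rewrite eq_le ?le_xvA ?le_xvB /= -(ler_int rat); nra.
- have [a [b [a_gt0 b_gt0 v_opt]]] := pareto_min_supported v_min.
  split; first by case: v_min.
  exists a%:~R, b%:~R; rewrite !ltr0z; do 2!split=> //.
  by move=> x Px; rewrite -!intrM -!intrD ler_int v_opt.
Qed.

Section Enumeration.
Variables (r : nat) (u : nat -> M).
Hypothesis u_G : forall m, in_G n q a0 a1 m <-> exists2 i, (i <= r)%N & u i = m.
Hypothesis u_sorted : forall i, (i < r)%N -> A (u i) < A (u i.+1).

Lemma u_pareto_min i : (i <= r)%N -> pareto_min (u i).
Proof. by move=> le_ir; apply/in_G_pareto_min/u_G; exists i. Qed.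

Lemma u_in_PD i : (i <= r)%N -> PD (u i).
Proof. by move/u_pareto_min => []. Qed.

Lemma u_decrB i : (i < r)%N -> B (u i.+1) < B (u i).
Proof.
move=> lt_ir.
exact: pareto_min_ltA (u_pareto_min lt_ir) (u_in_PD (ltnW lt_ir)) (u_sorted lt_ir).
Qed.

Lemma u_dominated m : PD m -> exists2 i, (i <= r)%N & in_sigma_dual n q (subM m (u i)).
Proof.
move=> Pm; have [v v_min [le_vmA le_vmB]] := exists_pareto_min_le Pm.
have /u_G[i le_ir ui_v] := proj2 (in_G_pareto_min v) v_min.
by exists i; rewrite // in_sigma_dual_subM ui_v le_vmA le_vmB.
Qed.

End Enumeration.

End CyclicQuotient.

Theorem mainTheorem3 (n q : nat) (a0 a1 : int) (r : nat) (u : nat -> M) :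
  (0 < q)%N -> (q < n)%N -> coprime q n ->
  (* u^0, ..., u^r are exactly the elements of G(D) ... *)
  (forall m : M, in_G n q a0 a1 m <-> exists2 i, (i <= r)%N & u i = m) ->
  (* ... ordered by strictly increasing <u^i, rho^0> *)
  (forall i, (i < r)%N -> dot (u i) rho0 < dot (u i.+1) rho0) ->
  [/\ (* iota and pi are well-defined maps *)
      ((forall f : nat -> M -> C, in_ideal_sum n q r u f ->
         in_free_sum n q r (iota_map r u f)) /\
      (forall g : nat -> M -> C, in_free_sum n q r g ->
         in_Gamma n q a0 a1 (pi_map r u g))),
      (* iota is injective *)
      (forall f : nat -> M -> C, in_ideal_sum n q r u f ->
         (forall j m, (j <= r)%N -> iota_map r u f j m = 0) ->
         forall i m, (1 <= i <= r)%N -> f i m = 0),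
      (* exactness in the middle: ker pi = im iota *)
      (forall g : nat -> M -> C, in_free_sum n q r g ->
         ((forall m, pi_map r u g m = 0) <->
          exists2 f : (nat -> M -> C), in_ideal_sum n q r u f &
            forall j m, (j <= r)%N -> iota_map r u f j m = g j m)),
      (* pi is surjective *)
      (forall h : M -> C, in_Gamma n q a0 a1 h ->
         exists2 g : (nat -> M -> C), in_free_sum n q r g &
           forall m, pi_map r u g m = h m)
    & (* each (x^{u^{i-1}}) \cap (x^{u^i}) is divisorial *)
      (forall i, (1 <= i <= r)%N ->
         exists b0 b1 : int, forall f : M -> C,
           (in_principal n q (u i.-1) f /\ in_principal n q (u i) f)
           <-> in_Gamma n q b0 b1 f)].
Proof.
move=> _ lt_qn _ u_G u_sorted.
have n_gt0 : (0 < n)%N by apply: leq_ltn_trans lt_qn.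
have A_u_mono i (lt_ir : (i < r)%N) := ltW (u_sorted i lt_ir).
have B_u_mono i (lt_ir : (i < r)%N) := ltW (u_decrB n_gt0 u_G u_sorted lt_ir).
have PD_u := u_in_PD n_gt0 u_G.
have PD_dominated := u_dominated n_gt0 u_G.
split.
- by split=> f; [apply: iota_map_in_free_sum | apply: pi_map_in_Gamma].
- by move=> f _; apply: iota_map_inj.
- move=> g g_free; split; first exact: ker_pi_map_sub_iota.
  by case=> f _; apply: pi_map_eq0_iota.
- exact: pi_map_surj PD_dominated.
- move=> i i_range; exists (- dot (u i) rho0), (- dot (u i.-1) (rho1 n q)) => f.
  exact: (principal_capE A_u_mono B_u_mono f i_range).
Qed.
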